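(* Let $f:\mathbb{R}^n\to\mathbb{R}$ be continuously differentiable, let $s$ be a positive integer, and let $D$ be a diagonal matrix with $D\succ 0$. A point $x\in C_s$ is $D$-stationary if and only if, for every $i\in\{1,\dots,n\}$, $$|\nabla_i f(x)| = 0 \text{ if } i\in I_1(x),\qquad |\nabla_i f(x)|\le D_{ii}^{1/2}\,M_s(D^{1/2}x)\text{ if } i\in I_0(x).$$
   Context: $C_s=\{x\in\mathbb{R}^n:\|x\|_0\le s\}$, where $\|x\|_0$ is the number of nonzero entries of $x$. For $z\in\mathbb{R}^n$, $\mathcal{P}_{C_s}(z)=\operatorname{argmin}_{y\in C_s}\|y-z\|_2^2$ is the (set-valued) projection onto $C_s$, i.e. the set of vectors obtained by keeping $s$ entries of $z$ of largest absolute value and zeroing the rest. A point $x\in C_s$ is called $D$-stationary if $x\in D^{-1/2}\mathcal{P}_{C_s}\big(D^{1/2}x-D^{-1/2}\nabla f(x)\big)$. $I_1(x)=\{i: x_i\neq 0\}$ and $I_0(x)=\{i:x_i=0\}$. $M_s(z)$ denotes the $s$-th largest absolute value among the entries of $z$. *)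

From HB Require Import structures.
From mathcomp Require Import all_boot all_order all_algebra.
From mathcomp Require Import all_classical all_reals all_analysis.
Set Implicit Arguments. Unset Strict Implicit. Unset Printing Implicit Defensive.
Import Order.TTheory GRing.Theory Num.Theory.
Import numFieldNormedType.Exports.
Local Open Scope ring_scope.
Local Open Scope classical_set_scope.

Section Defs.
Variables (R : realType) (n : nat).

Definition l0norm (x : 'rV[R]_n) : nat := #|[set i : 'I_n | x 0 i != 0]|.

Definition Cs (s : nat) : set 'rV[R]_n := [set x | (l0norm x <= s)%N].

Definition sqnorm (x : 'rV[R]_n) : R := \sum_i (x 0 i) ^+ 2.

Definition projCs (s : nat) (z : 'rV[R]_n) : set 'rV[R]_n :=
  [set y | Cs s y /\ forall y', Cs s y' -> sqnorm (y - z) <= sqnorm (y' - z)].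

Definition unitv (i : 'I_n) : 'rV[R]_n := delta_mx 0 i.

Definition grad (f : 'rV[R]_n -> R) (x : 'rV[R]_n) : 'rV[R]_n :=
  \row_i ('D_(unitv i) f x).

Definition posdef (D : 'M[R]_n) : Prop :=
  forall v : 'rV[R]_n, v != 0 -> 0 < (v *m D *m v^T) 0 0.

Definition sqrtD (D : 'M[R]_n) : 'M[R]_n := diag_mx (\row_i Num.sqrt (D i i)).
Definition invsqrtD (D : 'M[R]_n) : 'M[R]_n :=
  diag_mx (\row_i (Num.sqrt (D i i))^-1).

Definition D_stationary (f : 'rV[R]_n -> R) (D : 'M[R]_n) (s : nat)
  (x : 'rV[R]_n) : Prop :=
  Cs s x /\
  exists2 y, projCs s (x *m sqrtD D - grad f x *m invsqrtD D) y
           & x = y *m invsqrtD D.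

(* M_s(z): s-th largest absolute value among entries of z (0 if s > n) *)
Definition Ms (s : nat) (z : 'rV[R]_n) : R :=
  nth 0 (sort (fun a b : R => b <= a) [seq `|z 0 i| | i <- enum 'I_n]) s.-1.

End Defs.

(* Rescaling by D^{1/2} turns D-stationarity of x into the fixed-point property
   w \in P_{C_s}(z) for w = D^{1/2} x and z = w - D^{-1/2} grad f(x).  A point w of C_s
   is a projection of z onto C_s iff z agrees with w on the support of w and
   |z_i| <= M_s(w) off it.  Necessity: changing one entry of w, or moving the support
   from an entry j to an entry i, must not decrease ||w - z||^2.  Sufficiency:
   ||y - z||^2 >= sum_{i \notin supp y} z_i^2, and the s largest values z_i^2 are
   attained on supp w.  As D is diagonal, both conditions translate entrywise. *)

From HB Require Import structures.
From mathcomp Require Import all_boot all_order all_algebra.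
From mathcomp Require Import all_classical all_reals all_analysis.
From mathcomp Require Import ring lra.
Import Order.TTheory GRing.Theory Num.Theory.
Import numFieldNormedType.Exports.
Local Open Scope ring_scope.

Section SthLargest.
Context {R : realType} {n : nat}.
Implicit Types (z : 'rV[R]_n) (c : R).

Let abs_desc z := sort (fun a b : R => b <= a) [seq `|z 0 i| | i <- enum 'I_n].

Let MsE s z : Ms s z = nth 0 (abs_desc z) s.-1. Proof. by []. Qed.

Let size_abs_desc z : size (abs_desc z) = n.
Proof. by rewrite size_sort size_map size_enum_ord. Qed.

Let count_abs_desc z (p : pred R) : count p (abs_desc z) = #|[set j | p `|z 0 j|]|.
Proof.
rewrite (permP (permEl (perm_sort _ _))) count_map cardsE cardE.
by rewrite /enum_mem size_filter -enumT count_filter; apply: eq_count => i /=; rewrite andbT.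
Qed.

Let abs_desc_nonincr z i j : (i <= j < n)%N ->
  nth 0 (abs_desc z) j <= nth 0 (abs_desc z) i.
Proof.
case/andP=> ij jn.
have ge_trans : transitive (fun a b : R => b <= a).
  by move=> a b c ba cb; exact: le_trans cb ba.
apply: (sorted_leq_nth ge_trans (fun a => lexx a)) => //.
- by apply: sort_sorted => a b; exact: le_total.
- by rewrite inE size_abs_desc (leq_ltn_trans ij).
- by rewrite inE size_abs_desc.
Qed.

Lemma Ms_ge0 s z : 0 <= Ms s z.
Proof.
rewrite MsE; case: (ltnP s.-1 (size (abs_desc z))) => [lt_s|le_s]; last by rewrite nth_default.
by have /mapP[i _ ->] : nth 0 (abs_desc z) s.-1 \in [seq `|z 0 i| | i <- enum 'I_n]
  by rewrite -(mem_sort (fun a b : R => b <= a)) mem_nth.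
Qed.

Lemma Ms_ge_card s z c : (0 < s)%N ->
  (s <= #|[set j | (c <= `|z 0 j|)%R]|)%N -> c <= Ms s z.
Proof.
move=> s_gt0 s_le; rewrite MsE leNgt; apply/negP => Ms_lt.
move: s_le; rewrite -(count_abs_desc z (fun a => c <= a)).
rewrite -(cat_take_drop s.-1 (abs_desc z)) count_cat.
have -> : count (fun a => c <= a) (drop s.-1 (abs_desc z)) = 0%N.
  apply/eqP; rewrite -leqn0 leqNgt -has_count; apply/hasP => -[a].
  move=> /(nthP 0)[k]; rewrite size_drop size_abs_desc nth_drop => k_lt <-.
  apply/negP; rewrite -ltNge; apply: le_lt_trans _ Ms_lt; apply: abs_desc_nonincr.
  by rewrite leq_addr /= -ltn_subRL.
rewrite addn0 => /leq_trans/(_ (count_size _ _)); rewrite size_take_min.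
by move=> /leq_trans/(_ (geq_minl _ _)); rewrite leqNgt ltn_predL s_gt0.
Qed.

Lemma card_ge_Ms s z : (0 < s)%N -> 0 < Ms s z ->
  (s <= #|[set j | (Ms s z <= `|z 0 j|)%R]|)%N.
Proof.
move=> s_gt0 Ms_gt0; rewrite -(count_abs_desc z (fun a => Ms s z <= a)).
have lt_s : (s.-1 < n)%N.
  rewrite ltnNge; apply/negP => le_s.
  by move: Ms_gt0; rewrite MsE nth_default ?ltxx ?size_abs_desc.
rewrite -(cat_take_drop s (abs_desc z)) count_cat; apply: leq_trans (leq_addr _ _).
have: all (fun a => Ms s z <= a) (take s (abs_desc z)).
  apply/(all_nthP 0) => k; rewrite size_take_min leq_min => /andP[k_lt_s _].
  rewrite nth_take // MsE; apply: abs_desc_nonincr.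
  by rewrite lt_s andbT -ltnS prednK.
rewrite all_count => /eqP ->.
by rewrite size_take_min size_abs_desc leq_min leqnn -(prednK s_gt0).
Qed.

End SthLargest.

Lemma ler_sqr_norm {R : realDomainType} (a b : R) : (a ^+ 2 <= b ^+ 2) = (`|a| <= `|b|).
Proof. by rewrite -[a ^+ 2]real_normK ?num_real // -[b ^+ 2]real_normK ?num_real // ler_sqr. Qed.

Lemma sqr_le0_eq0 {R : realDomainType} (a : R) : a ^+ 2 <= 0 -> a = 0.
Proof. by move=> a2_le0; apply/eqP; rewrite -sqrf_eq0 eq_le a2_le0 sqr_ge0. Qed.

Section Support.
Context {R : realType} {n : nat}.
Implicit Types (w y z : 'rV[R]_n) (i j : 'I_n) (A : {set 'I_n}).

Definition supp w : {set 'I_n} := [set k | w 0 k != 0].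

Lemma CsE s w : Cs s w = (#|supp w| <= s)%N :> Prop.
Proof.
rewrite /Cs /l0norm /supp /=; congr (is_true (_ <= s)%N); apply: eq_card => k.
by rewrite inE; apply/idP/idP; rewrite in_setE.
Qed.

Definition row_upd w i (c : R) : 'rV[R]_n := \row_k (if k == i then c else w 0 k).

Lemma row_updE w i c k : row_upd w i c 0 k = if k == i then c else w 0 k.
Proof. by rewrite mxE. Qed.

Lemma supp_row_upd w i c : supp (row_upd w i c) \subset i |: supp w.
Proof.
by apply/fintype.subsetP => k; rewrite !inE row_updE; case: (k == i) => //= ->; rewrite orbT.
Qed.

Lemma supp_row_upd0 w j : supp (row_upd w j 0) \subset supp w :\ j.
Proof.
by apply/fintype.subsetP => k; rewrite !inE row_updE; case: (k == j); rewrite ?eqxx.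
Qed.

Lemma sqnorm_row_upd w z i c : sqnorm (row_upd w i c - z) =
  sqnorm (w - z) - (w 0 i - z 0 i) ^+ 2 + (c - z 0 i) ^+ 2.
Proof.
rewrite /sqnorm (bigD1 i) // [in RHS](bigD1 i) //= !mxE eqxx.
rewrite (eq_bigr (fun k => ((w - z) 0 k) ^+ 2)) => [|k /negbTE k_neq_i]; first by ring.
by rewrite !mxE k_neq_i.
Qed.

Lemma sum_setC A (F : 'I_n -> R) : \sum_(i in ~: A) F i = \sum_i F i - \sum_(i in A) F i.
Proof.
rewrite (bigID (mem A) predT) /= addrC addrK; apply: eq_bigl => i; by rewrite inE.
Qed.

Lemma sqnorm_sub_ge_offsupp y z : \sum_(i in ~: supp y) z 0 i ^+ 2 <= sqnorm (y - z).
Proof.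
rewrite /sqnorm (bigID (mem (supp y)) predT) /=.
have -> : \sum_(i | ~~ (i \in supp y)) ((y - z) 0 i) ^+ 2 = \sum_(i in ~: supp y) z 0 i ^+ 2.
  apply: eq_big => [i|i]; first by rewrite finset.in_setC.
  by rewrite inE negbK !mxE => /eqP ->; rewrite sub0r sqrrN.
by rewrite lerDr sumr_ge0 // => i _; rewrite sqr_ge0.
Qed.

Lemma sqnorm_sub_offsupp w z : (forall i, w 0 i != 0 -> z 0 i = w 0 i) ->
  sqnorm (w - z) = \sum_(i in ~: supp w) z 0 i ^+ 2.
Proof.
move=> z_eq_w; rewrite /sqnorm (bigID (mem (supp w)) predT) /= big1 ?add0r => [|i].
  apply: eq_big => [i|i]; first by rewrite finset.in_setC.
  by rewrite !inE negbK !mxE => /eqP ->; rewrite sub0r sqrrN.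
by rewrite inE !mxE => /z_eq_w ->; rewrite subrr expr0n.
Qed.

Lemma ler_sum_threshold (S S1 : {set 'I_n}) (a : 'I_n -> R) c : 0 <= c ->
  (#|S| <= #|S1|)%N -> (forall i, i \notin S1 -> a i <= c) ->
  (forall i, i \in S1 -> c <= a i) ->
  \sum_(i in S) a i <= \sum_(i in S1) a i.
Proof.
move=> c_ge0 le_card a_le a_ge.
rewrite (big_setID S1) [X in _ <= X](big_setID S) /= finset.setIC lerD2l.
apply: (@le_trans _ _ (c *+ #|S :\: S1|)).
  by rewrite -sumr_const; apply: ler_sum => i; rewrite inE => /andP[/a_le].
apply: (@le_trans _ _ (c *+ #|S1 :\: S|)); last first.
  by rewrite -sumr_const; apply: ler_sum => i; rewrite inE => /andP[_ /a_ge].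
apply: ler_wpMn2l => //; move: le_card.
by rewrite -(cardsID S1 S) -[X in (_ <= X)%N](cardsID S S1) finset.setIC leq_add2l.
Qed.

End Support.

Section ProjectionOntoCs.
Context {R : realType} {n : nat} (s : nat) (z w : 'rV[R]_n).
Hypothesis s_gt0 : (0 < s)%N.

Lemma projCs_eq_on_supp i : projCs s z w -> w 0 i != 0 -> z 0 i = w 0 i.
Proof.
case=> Cw w_min wi_neq0.
have /w_min : Cs s (row_upd w i (z 0 i)).
  rewrite CsE (leq_trans (subset_leq_card (supp_row_upd _ _ _))) //.
  by rewrite cardsU1 inE wi_neq0 add0n -CsE.
rewrite sqnorm_row_upd subrr expr0n addr0 => le_cost.
by apply/esym/subr0_eq/sqr_le0_eq0; lra.
Qed.

Lemma projCs_le_Ms_off_supp i : projCs s z w -> w 0 i = 0 -> `|z 0 i| <= Ms s w.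
Proof.
move=> pw wi_eq0; have [Cw w_min] := pw.
have i_notin : i \notin supp w by rewrite inE wi_eq0 eqxx.
have [lt_s|ge_s] := ltnP #|supp w| s.
  have /w_min : Cs s (row_upd w i (z 0 i)).
    rewrite CsE (leq_trans (subset_leq_card (supp_row_upd _ _ _))) //.
    by rewrite cardsU1 i_notin add1n.
  rewrite sqnorm_row_upd subrr expr0n addr0 wi_eq0 sub0r sqrrN => le_cost.
  by rewrite (@sqr_le0_eq0 _ (z 0 i)) ?normr0 ?Ms_ge0 //; lra.
(* Trading the support entry j for i is admissible, so |z i| <= |z j| = |w j|. *)
apply: Ms_ge_card => //; apply: leq_trans ge_s (subset_leq_card _).
apply/fintype.subsetP => j; rewrite !inE => wj_neq0.
have i_neq_j : i != j by apply: contraNneq i_notin => ->; rewrite inE.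
have /w_min : Cs s (row_upd (row_upd w j 0) i (z 0 i)).
  rewrite CsE (leq_trans (subset_leq_card (supp_row_upd _ _ _))) //.
  rewrite cardsU1 (leq_trans (leq_add (leq_b1 _) (subset_leq_card (supp_row_upd0 _ _)))) //.
  by move: Cw; rewrite CsE (cardsD1 j) inE wj_neq0.
rewrite !sqnorm_row_upd row_updE (negbTE i_neq_j) wi_eq0 (projCs_eq_on_supp _ pw wj_neq0).
rewrite !subrr !sub0r !sqrrN expr0n /= => le_cost.
by rewrite -ler_sqr_norm; lra.
Qed.

Lemma projCs_intro : Cs s w ->
  (forall i, w 0 i != 0 -> z 0 i = w 0 i) ->
  (forall i, w 0 i = 0 -> `|z 0 i| <= Ms s w) -> projCs s z w.
Proof.
move=> Cw z_eq_w z_le_Ms; split=> // y Cy.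
rewrite sqnorm_sub_offsupp //; apply: le_trans (sqnorm_sub_ge_offsupp y z).
set m := Ms s w; have [m_le0|m_gt0] := leP m 0.
  rewrite big1 ?sumr_ge0 // => [i _|i]; first exact: sqr_ge0.
  rewrite !inE negbK => /eqP/z_le_Ms/le_trans/(_ m_le0).
  by rewrite normr_le0 => /eqP ->; rewrite expr0n.
have supp_wE : supp w = [set j | (m <= `|w 0 j|)%R].
  apply/eqP; rewrite eq_sym eqEcard; apply/andP; split.
    by apply/fintype.subsetP => j; rewrite !inE -normr_gt0 => /(lt_le_trans m_gt0).
  by rewrite (leq_trans _ (card_ge_Ms s w s_gt0 m_gt0)) // -CsE.
rewrite !sum_setC lerD2l lerN2.
apply: (ler_sum_threshold _ _ _ _ (sqr_ge0 m)).
- by apply: (leq_trans _ (_ : s <= #|supp w|)%N); rewrite -?CsE // supp_wE card_ge_Ms.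
- move=> i; rewrite !inE negbK => /eqP/z_le_Ms.
  by rewrite ler_sqr_norm (ger0_norm (ltW m_gt0)).
- move=> i i_supp; rewrite z_eq_w; last by rewrite inE in i_supp.
  by rewrite ler_sqr_norm (ger0_norm (ltW m_gt0)); move: i_supp; rewrite supp_wE inE.
Qed.

Lemma projCsP : Cs s w -> projCs s z w <->
  forall i, (w 0 i != 0 -> z 0 i = w 0 i) /\ (w 0 i = 0 -> `|z 0 i| <= Ms s w).
Proof.
move=> Cw; split=> [pw i | conds].
  by split; [exact: projCs_eq_on_supp | exact: projCs_le_Ms_off_supp].
by apply: projCs_intro => // i; [case: (conds i) | case: (conds i)].
Qed.

End ProjectionOntoCs.

Lemma scaled_stationarityP {R : realFieldType} (r a g m : R) : 0 < r ->
  (a * r != 0 -> a * r - g / r = a * r) /\ (a * r = 0 -> `|a * r - g / r| <= m)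
  <-> (a != 0 -> `|g| = 0) /\ (a = 0 -> `|g| <= r * m).
Proof.
move=> r_gt0; have r_neq0 : r != 0 by rewrite gt_eqF.
have g_eq0 : a * r - g / r = a * r <-> `|g| = 0.
  split=> [/eqP|/normr0_eq0 ->]; last by rewrite mul0r subr0.
  rewrite -subr_eq0 addrAC subrr add0r oppr_eq0 mulf_eq0 invr_eq0 (negPf r_neq0) orbF.
  by move=> /eqP ->; rewrite normr0.
have g_le : (`|- (g / r)| <= m) = (`|g| <= r * m).
  by rewrite normrN normrM normfV (gtr0_norm r_gt0) ler_pdivrMr // mulrC.
have [->|a_neq0] := eqVneq a 0.
  by rewrite mul0r sub0r g_le eqxx; split=> -[_ h]; split=> // _; apply: h.
have ar_neq0 : a * r != 0 by rewrite mulf_neq0.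
by split=> -[h _]; split=> [_|/eqP]; rewrite ?(negPf a_neq0) ?(negPf ar_neq0) //;
  apply/g_eq0; apply: h.
Qed.

Lemma posdef_diag_gt0 {R : realType} {n : nat} (D : 'M[R]_n) :
  posdef D -> forall i, 0 < D i i.
Proof.
move=> D_pd i; have ei_neq0 : delta_mx 0 i != 0 :> 'rV[R]_n.
  by apply/eqP => /matrixP/(_ 0 i)/eqP; rewrite !mxE !eqxx oner_eq0.
move: (D_pd _ ei_neq0); rewrite -rowE trmx_delta !mxE (bigD1 i) //= big1.
  by rewrite !mxE !eqxx mulr1 addr0.
by move=> k /negPf k_neq_i; rewrite !mxE k_neq_i eqxx /= mulr0.
Qed.

Section DiagonalScaling.
Context {R : realType} {n : nat} (D : 'M[R]_n).
Implicit Types (x g : 'rV[R]_n) (i : 'I_n).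

Lemma mul_sqrtD_entry x i : (x *m sqrtD D) 0 i = x 0 i * Num.sqrt (D i i).
Proof. by rewrite /sqrtD mul_mx_diag !mxE. Qed.

Lemma mul_sqrtD_sub_invsqrtD_entry x g i :
  (x *m sqrtD D - g *m invsqrtD D) 0 i = x 0 i * Num.sqrt (D i i) - g 0 i / Num.sqrt (D i i).
Proof. by rewrite /sqrtD /invsqrtD !mul_mx_diag !mxE. Qed.

Hypothesis D_gt0 : forall i, 0 < D i i.

Let sqrtD_neq0 i : Num.sqrt (D i i) != 0.
Proof. by rewrite gt_eqF // sqrtr_gt0. Qed.

Lemma sqrtDK x : x *m sqrtD D *m invsqrtD D = x.
Proof. by apply/rowP => i; rewrite /sqrtD /invsqrtD !mul_mx_diag !mxE mulfK. Qed.

Lemma invsqrtDK x : x *m invsqrtD D *m sqrtD D = x.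
Proof. by apply/rowP => i; rewrite /sqrtD /invsqrtD !mul_mx_diag !mxE divfK. Qed.

Lemma supp_mul_sqrtD x : supp (x *m sqrtD D) = supp x.
Proof. by apply/setP => i; rewrite !inE mul_sqrtD_entry mulf_eq0 negb_or sqrtD_neq0 andbT. Qed.

Lemma Cs_mul_sqrtD s x : Cs s (x *m sqrtD D) = Cs s x.
Proof. by rewrite !CsE supp_mul_sqrtD. Qed.

Lemma D_stationaryE f s x : D_stationary f D s x <->
  projCs s (x *m sqrtD D - grad f x *m invsqrtD D) (x *m sqrtD D).
Proof.
split=> [[_ [y py x_eq]] | px].
  have w_eq : x *m sqrtD D = y by rewrite x_eq invsqrtDK.
  by rewrite [in X in projCs _ _ X]w_eq.
split; first by case: px; rewrite Cs_mul_sqrtD.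
by exists (x *m sqrtD D); rewrite ?sqrtDK.
Qed.

End DiagonalScaling.

Local Open Scope classical_set_scope.

Theorem lemma4p2 (R : realType) (n : nat) (f : 'rV[R]_n -> R) (s : nat)
  (D : 'M[R]_n) :
  (forall x, differentiable f x) ->
  (forall i : 'I_n, continuous (fun x => 'D_(@unitv R n i) f x)) ->
  (0 < s)%N ->
  is_diag_mx D -> posdef D ->
  forall x : 'rV[R]_n, Cs s x ->
  (D_stationary f D s x <->
   forall i : 'I_n,
     (x 0 i != 0 -> `|grad f x 0 i| = 0) /\
     (x 0 i = 0 -> `|grad f x 0 i| <= Num.sqrt (D i i) * Ms s (x *m sqrtD D))).
Proof.
(* Only grad f at x and the diagonal of D enter. *)
move=> _ _ s_gt0 _ /posdef_diag_gt0 D_gt0 x Csx.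
rewrite D_stationaryE // projCsP ?Cs_mul_sqrtD //.
have sqrtD_gt0 i : 0 < Num.sqrt (D i i) by rewrite sqrtr_gt0.
split=> stat i; have := stat i;
  rewrite mul_sqrtD_sub_invsqrtD_entry !mul_sqrtD_entry scaled_stationarityP //.
Qed.
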